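(* Let $T$ be an $spo$-tableau and $x_1\in B_1$ such that the new box of $U=x_1\rightarrow T$ lies in row 1. If $x_2\in B_0$ and the insertion of $x_2$ into $U$ causes a cancellation, then the first rows of $U\leftarrow x_2$ and of $U$ have the same number of boxes.
   Context: Fix positive integers $m,n$. Let $B_0=\{1,\bar1,2,\bar2,\dots,m,\bar m\}$, $B_1=\{1^\circ,\dots,n^\circ\}$, $B=B_0\cup B_1$, totally ordered by $1<\bar1<2<\bar2<\cdots<m<\bar m<1^\circ<\cdots<n^\circ$. Rows are numbered from the top starting at 1, columns from the left. An $spo$-tableau of shape $\lambda$ is a filling of the Young diagram of $\lambda$ with entries of $B$ such that (i) the boxes containing entries of $B_0$ form a Young diagram $\sigma\subseteq\lambda$, and this part is weakly increasing along rows, strictly increasing down columns, and every entry in row $i$ is $\ge i$; (ii) the entries of $B_1$ (filling $\lambda/\sigma$) are strictly increasing along rows and weakly increasing down columns. $spo$-insertion: a forward jeu de taquin slide on an empty box with right neighbour $a$ and lower neighbour $b$ moves $a$ left into the empty box if $a<b$ or ($a=b\in B_1$), and moves $b$ up into the empty box if $b<a$ or ($a=b\in B_0$); if only one neighbour exists it moves in; slides are repeated until the empty box has no right or lower neighbour, and then that box is deleted. Inserting $z\in B_0$ into row $r$: if no entry of the row exceeds $z$, append $z$ in a new box at the end of the row; otherwise let $w$ be the least entry of the row with $w>z$; if $z=r$ (unbarred) and $w=\bar r$, delete $\bar r$ leaving an empty box (a cancellation); otherwise replace $w$ by $z$, displacing $w$. Inserting $z\in B_1$ into column $c$: if no entry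 of the column exceeds $z$, append $z$ in a new box at the bottom; otherwise replace the least entry $w>z$ of the column by $z$, displacing $w$. To insert $x\in B_0$ into $T$ (result $T\leftarrow x$) start by inserting $x$ into row 1; to insert $x\in B_1$ (result $x\rightarrow T$) start by inserting $x$ into column 1. Whenever an entry $w$ is displaced from a box in row $r$, column $c$: if $w\in B_0$ insert it into row $r+1$; if $w\in B_1$ insert it into column $c+1$. The process ends when an entry is placed in a new box, or when a cancellation occurs, in which case the empty box is moved to an outer corner by forward slides and deleted. If no cancellation occurs the result has exactly one new box; if a cancellation occurs the result has exactly one box fewer. *)

From mathcomp Require Import all_boot.
Set Implicit Arguments. Unset Strict Implicit. Unset Printing Implicit Defensive.

(* Letters: inl (i, false) = i, inl (i, true) = \bar i  (elements of B_0);
            inr j = j^circ (elements of B_1). *)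
Definition letter := ((nat * bool) + nat)%type.

Definition isB0 (a : letter) : bool := if a is inl _ then true else false.
Definition isB1 (a : letter) : bool := ~~ isB0 a.

Definition inB0 (m : nat) (a : letter) : bool :=
  if a is inl (i, _) then (1 <= i <= m) else false.
Definition inB1 (n : nat) (a : letter) : bool :=
  if a is inr j then (1 <= j <= n) else false.
Definition inB (m n : nat) (a : letter) : bool := inB0 m a || inB1 n a.

Definition ltL (a b : letter) : bool :=
  match a, b with
  | inl (i, bi), inl (j, bj) => (i < j) || ((i == j) && ~~ bi && bj)
  | inl _, inr _ => true
  | inr _, inl _ => false
  | inr i, inr j => i < j
  end.
Definition leL (a b : letter) : bool := (a == b) || ltL a b.

(* Tableaux: list of rows, top row first; indices below are 0-based
   (row index r here is row r+1 of the paper). *)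
Definition tableau := seq (seq letter).
Definition dflt : letter := inr 0.
Definition row (t : tableau) (r : nat) : seq letter := nth [::] t r.
Definition entry (t : tableau) (r c : nat) : option letter :=
  nth None [seq Some a | a <- row t r] c.

Definition isB0o (o : option letter) : bool :=
  if o is Some a then isB0 a else false.

Definition is_spo (m n : nat) (t : tableau) : Prop :=
  all (fun s => 0 < size s) t /\ sorted geq (shape t) /\
  all (all (inB m n)) t /\
  (* the B_0-boxes form a Young diagram sigma *)
  (forall r c, isB0o (entry t r c.+1) -> isB0o (entry t r c)) /\
  (forall r c, isB0o (entry t r.+1 c) -> isB0o (entry t r c)) /\
  (forall r c a b, entry t r c = Some a -> entry t r c.+1 = Some b ->
     isB0 a -> isB0 b -> leL a b) /\
  (forall r c a b, entry t r c = Some a -> entry t r.+1 c = Some b ->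
     isB0 a -> isB0 b -> ltL a b) /\
  (* every B_0 entry in (paper) row r+1 is >= r+1 *)
  (forall r c i bi, entry t r c = Some (inl (i, bi)) -> r.+1 <= i) /\
  (forall r c a b, entry t r c = Some a -> entry t r c.+1 = Some b ->
     isB1 a -> isB1 b -> ltL a b) /\
  (forall r c a b, entry t r c = Some a -> entry t r.+1 c = Some b ->
     isB1 a -> isB1 b -> leL a b).

Definition minL (a b : letter) : letter := if ltL b a then b else a.
Definition least (s : seq letter) : letter :=
  match s with [::] => dflt | x :: s' => foldl minL x s' end.

Definition set_row (t : tableau) (r : nat) (s : seq letter) : tableau :=
  set_nth [::] t r s.
Definition set_entry (t : tableau) (r c : nat) (a : letter) : tableau :=
  set_row t r (set_nth a (row t r) c a).

Inductive outcome := NewBox of nat & nat (* row, column (0-based) *)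
                   | Cancelled.

Inductive task :=
  | RowIns of letter & nat
  | ColIns of letter & nat
  | Slide of nat & nat       (* empty box at (r, c) to be slid out *)
  | Fin of outcome.

Definition step (t : tableau) (k : task) : tableau * task :=
  match k with
  | RowIns z r =>
      let rw := row t r in
      let big := [seq a <- rw | ltL z a] in
      if big is [::] then (set_row t r (rcons rw z), Fin (NewBox r (size rw)))
      else
        let w := least big in
        let c := index w rw in
        if (z == inl (r.+1, false)) && (w == inl (r.+1, true)) then
          (t, Slide r c)  (* cancellation: empty box at (r,c) *)
        else
          let t' := set_entry t r c z in
          if isB0 w then (t', RowIns w r.+1) else (t', ColIns w c.+1)
  | ColIns z c =>
      let colR := [seq r <- iota 0 (size t) | c < size (row t r)] in
      let ents := [seq nth dflt (row t r) c | r <- colR] in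
      let big := [seq a <- ents | ltL z a] in
      if big is [::] then
        let r0 := size colR in
        (set_row t r0 (rcons (row t r0) z), Fin (NewBox r0 (size (row t r0))))
      else
        let w := least big in
        let r := nth 0 colR (index w ents) in
        let t' := set_entry t r c z in
        if isB0 w then (t', RowIns w r.+1) else (t', ColIns w c.+1)
  | Slide r c =>
      let rw := row t r in
      let rb := row t r.+1 in
      let hasR := c.+1 < size rw in
      let hasB := c < size rb in
      let a := nth dflt rw c.+1 in
      let b := nth dflt rb c in
      if hasR && hasB then
        if ltL a b || ((a == b) && isB1 a) then (set_entry t r c a, Slide r c.+1)
        else (set_entry t r c b, Slide r.+1 c)
      else if hasR then (set_entry t r c a, Slide r c.+1)
      else if hasB then (set_entry t r c b, Slide r.+1 c)
      else ([seq s <- set_row t r (take c rw) | 0 < size s], Fin Cancelled)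
  | Fin o => (t, Fin o)
  end.

Fixpoint run (fuel : nat) (t : tableau) (k : task) : option (tableau * outcome) :=
  match k with
  | Fin o => Some (t, o)
  | _ => match fuel with
         | 0 => None
         | f.+1 => let: (t', k') := step t k in run f t' k'
         end
  end.

(* ample fuel: the process takes at most about 4 * #boxes + 4 steps *)
Definition fuel (t : tableau) : nat := 4 * size (flatten t) + 10.

(* T <- x  for x in B_0 *)
Definition insert_row (t : tableau) (x : letter) := run (fuel t) t (RowIns x 0).
(* x -> T  for x in B_1 *)
Definition insert_col (x : letter) (t : tableau) := run (fuel t) t (ColIns x 0).

From mathcomp Require Import all_boot zify.
Set Implicit Arguments. Unset Strict Implicit. Unset Printing Implicit Defensive.

(* Once the process has left the first row it never returns to it, and a
   column insertion of a B_1 letter only displaces B_1 letters, so it never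
   cancels (first_row_fixed, col_no_cancel).  Hence either the first row just
   had one entry replaced, or x2 = 1 cancels the entry \bar 1 of the first
   row and the empty box slides out of it.
   The key invariant of the column insertion x1 -> T (col_insert_first_row)
   is that for every B_0 entry of the first row of U, at column c0, there is
   a column jj >= c0, short of the last box of the row, where the entry of
   row 2 at column jj is smaller than the entry of row 1 at column jj+1
   (slide_exits).  The jeu de taquin slide therefore moves down into row 2
   before reaching the end of the first row (slide_first_row), and the first
   row keeps its length. *)

Arguments row : simpl never.

Lemma ltL_irr a : ltL a a = false.
Proof. case: a => [[i b]|i] /=; rewrite ?ltnn //= eqxx; by case: b. Qed.

Lemma ltL_trans a b d : ltL a b -> ltL b d -> ltL a d.
Proof. by case: a => [[i bi]|i]; case: b => [[j bj]|j]; case: d => [[k bk]|k] //=; lia. Qed.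

Lemma ltL_asym a b : ltL a b -> ltL b a = false.
Proof. by move=> hab; apply/negbTE/negP => /(ltL_trans hab); rewrite ltL_irr. Qed.

Lemma leL_refl a : leL a a.
Proof. by rewrite /leL eqxx. Qed.

Lemma leL_trans a b d : leL a b -> leL b d -> leL a d.
Proof.
rewrite /leL => /orP[/eqP->|hab] // /orP[/eqP<-|hbd]; first by rewrite hab orbT.
by rewrite (ltL_trans hab hbd) orbT.
Qed.

Lemma ltL_B1 z w : isB1 z -> ltL z w -> isB1 w.
Proof. by case: z => [[]|] //; case: w => [[]|]. Qed.

Lemma least_mem s : s != [::] -> least s \in s.
Proof.
case: s => // x s _ /=.
elim: s x => [|y s IH] x /=; first by rewrite mem_seq1.
by have := IH (minL x y); rewrite /minL; case: ifP => _; rewrite !inE;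
  case/orP=> ->; rewrite ?orbT.
Qed.

(* The letter an insertion step displaces: the least of the entries exceeding
   the inserted letter. *)
Lemma least_filter (p : pred letter) s b l : [seq a <- s | p a] = b :: l ->
  p (least (b :: l)) /\ least (b :: l) \in s.
Proof. by move=> E; apply/andP; rewrite -mem_filter E least_mem. Qed.

Lemma run_fin f t o : run f t (Fin o) = Some (t, o).
Proof. by case: f. Qed.

Lemma row_set_row t r s i : row (set_row t r s) i = if i == r then s else row t i.
Proof. by rewrite /row /set_row nth_set_nth. Qed.

Lemma row_set_entry t r c a i :
  row (set_entry t r c a) i = if i == r then set_nth a (row t r) c a else row t i.
Proof. by rewrite /set_entry row_set_row. Qed.

Lemma nth_set_nth_in (T : eqType) (d d' y : T) s n i : n < size s ->
  nth d (set_nth d' s n y) i = if i == n then y else nth d s i.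
Proof. by elim: s n i => [|x s IH] [|n] [|i] //=; rewrite ltnS => h; rewrite ?IH. Qed.

Lemma size_set_entry t r j a i : j < size (row t r) ->
  size (row (set_entry t r j a) i) = size (row t i).
Proof.
move=> hj; rewrite row_set_entry; case: eqP => [->|_] //.
by rewrite size_set_nth; lia.
Qed.

Lemma nth_set_entry t r j a i k : j < size (row t r) ->
  nth dflt (row (set_entry t r j a) i) k =
  if (i == r) && (k == j) then a else nth dflt (row t i) k.
Proof. by move=> hj; rewrite row_set_entry; case: eqP => [->|_] //=; rewrite nth_set_nth_in. Qed.

Definition col_rows (t : tableau) (c : nat) : seq nat :=
  [seq r <- iota 0 (size t) | c < size (row t r)].
Definition col_entries (t : tableau) (c : nat) : seq letter :=
  [seq nth dflt (row t r) c | r <- col_rows t c].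
Definition col_row_of (t : tableau) (c : nat) (w : letter) : nat :=
  nth 0 (col_rows t c) (index w (col_entries t c)).

(* A column insertion of a letter of B_1 never cancels: every letter it
   displaces is larger, hence again in B_1. *)
Lemma col_no_cancel f t z k V : isB1 z -> run f t (ColIns z k) <> Some (V, Cancelled).
Proof.
elim: f t z k => [|f IH] t z k hz //=.
rewrite /step -/(col_rows t k) -/(col_entries t k).
case E: [seq a <- col_entries t k | ltL z a] => [|b s]; first by case: (f).
rewrite /=; change (foldl minL b s) with (least (b :: s)).
have [hzw _] := least_filter E.
have hw1 := ltL_B1 hz hzw.
by rewrite (negbTE hw1); apply: IH.
Qed.

Definition below_first_row (k : task) : Prop :=
  match k with
  | RowIns _ r | Slide r _ => 0 < r
  | ColIns z _ => isB1 z
  | Fin _ => True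
  end.

Lemma first_row_fixed f t k V : 0 < size (row t 0) -> below_first_row k ->
  run f t k = Some (V, Cancelled) -> row V 0 = row t 0.
Proof.
elim: f t k => [|f IH] t k h0; first by case: k => //= o _ [<-].
case: k => [z r|z cc|r cc|o] hk; last by rewrite run_fin => -[<-].
- have r0 : (0 == r) = false by rewrite eq_sym; apply/negbTE; rewrite -lt0n.
  have IHrow c a w : run f (set_entry t r c a) (RowIns w r.+1) = Some (V, Cancelled) ->
      row V 0 = row t 0.
    by move/IH; rewrite !row_set_entry r0; apply.
  rewrite /=; case: [seq a <- row t r | ltL z a] => [|b s] /=; first by case: (f).
  case: ifP => _; first exact: IH.
  case: ifP => hw; first exact: IHrow.
  by move=> H; case: (col_no_cancel _ H); rewrite /isB1 hw.
- by move=> H; case: (col_no_cancel hk H).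
- have r0 : (0 == r) = false by rewrite eq_sym; apply/negbTE; rewrite -lt0n.
  rewrite /=; do ![case: ifP => _] => //; try by move/IH; rewrite !row_set_entry r0; apply.
  rewrite run_fin => -[<-]; move: h0; rewrite /row /set_row.
  by case: t => [|x t] //=; case: r hk r0 => [|r] //= _ _ ->.
Qed.

(* The empty box of a slide in the first row at column k leaves the first row
   before reaching its end if, at some column jj >= k, the entry below
   (row 2, column jj) is smaller than the entry to the right (row 1, column
   jj+1). *)
Definition slide_exits (t : tableau) (k : nat) : Prop :=
  exists jj, [/\ k <= jj, jj.+1 < size (row t 0), jj < size (row t 1) &
                 ltL (nth dflt (row t 1) jj) (nth dflt (row t 0) jj.+1)].

Lemma slide_first_row f t k V : slide_exits t k ->
  run f t (Slide 0 k) = Some (V, Cancelled) -> size (row V 0) = size (row t 0).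
Proof.
elim: f t k => [|f IH] t k [jj [hk hs0 hs1 hlt]] //=.
have -> : k.+1 < size (row t 0) by lia.
have -> : k < size (row t 1) by lia.
have hk0 : k < size (row t 0) by lia.
case: ifP => hright.
- (* the entry to the right moves left; the witness jj lies further right *)
  have hkj : k < jj.
    rewrite ltn_neqAle hk andbT; apply/eqP => ekj; subst k.
    by move: hright; rewrite (ltL_asym hlt) /= => /andP[/eqP E]; rewrite E ltL_irr in hlt.
  move/IH; rewrite size_set_entry //; apply; exists jj.
  rewrite !size_set_entry // !nth_set_entry //=; split => //; last by case: eqP => //; lia.
- (* the entry below moves up: the first row keeps its length for good *)
  move/first_row_fixed => -> //; rewrite size_set_entry //; lia.
Qed.

Definition rows_nonincreasing (t : tableau) : Prop :=
  forall i i', i <= i' -> size (row t i') <= size (row t i).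

Definition cols_weakly_increasing_from (t : tableau) (j : nat) : Prop :=
  forall k i, j <= k -> k < size (row t i.+1) ->
  leL (nth dflt (row t i) k) (nth dflt (row t i.+1) k).

Lemma col_chain t j k i d : rows_nonincreasing t -> cols_weakly_increasing_from t j ->
  j <= k -> k < size (row t (i + d)) ->
  leL (nth dflt (row t i) k) (nth dflt (row t (i + d)) k).
Proof.
move=> hrows hcols hjk; elim: d => [|d IH] hd; first by rewrite addn0 leL_refl.
rewrite addnS in hd *; apply: leL_trans (IH _) (hcols _ _ hjk hd).
by apply: leq_trans hd _; apply: hrows; lia.
Qed.

Lemma col_rows_nil t j : col_rows t j = [::] -> size (row t 0) <= j.
Proof.
rewrite leqNgt => hnil; apply/negP => hj.
have : 0 \in col_rows t j by rewrite mem_filter hj mem_iota /=; case: (t) hj.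
by rewrite hnil.
Qed.

Lemma col_rows_top t j : j < size (row t 1) -> j < size (row t 0) ->
  exists rest, col_rows t j = [:: 0, 1 & rest].
Proof.
rewrite /col_rows; case: t => [|x [|y t]]; rewrite /row //= ?nth_nil //.
by move=> -> ->; eexists.
Qed.

Lemma col_row_of_spec t j w : rows_nonincreasing t -> cols_weakly_increasing_from t j ->
  w \in col_entries t j ->
  let r := col_row_of t j w in
  j < size (row t r) /\ (1 < r -> ltL (nth dflt (row t 1) j) w).
Proof.
move=> hrows hcols hw r.
have hidx : index w (col_entries t j) < size (col_rows t j).
  by rewrite -(size_map (fun r => nth dflt (row t r) j)) index_mem.
have hjr : j < size (row t r) by have := mem_nth 0 hidx; rewrite mem_filter => /andP[].
have hwr : nth dflt (row t r) j = w.
  by rewrite -[RHS](nth_index dflt hw) /col_entries (nth_map 0).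
split=> // r2.
have hj1 : j < size (row t 1) by apply: leq_trans hjr (hrows _ _ _); lia.
have hj0 : j < size (row t 0) by apply: leq_trans hj1 (hrows _ _ _).
have [rest hcol] := col_rows_top hj1 hj0.
(* row 2 comes before row r in column j, so its entry differs from w *)
have hidx1 : 1 < index w (col_entries t j).
  move: r2; rewrite /r /col_row_of hcol.
  by case: (index w _) => [|[|]].
have hne : nth dflt (row t 1) j != w.
  by have := before_find dflt hidx1; rewrite /col_entries hcol /= => ->.
have := col_chain (i:=1) (d:=r - 1) hrows hcols (leqnn j); rewrite subnKC ?hwr; last lia.
by move=> /(_ hjr); rewrite /leL (negbTE hne).
Qed.

Lemma set_entry_invariants t r j a : j < size (row t r) ->
  rows_nonincreasing t -> cols_weakly_increasing_from t j ->
  rows_nonincreasing (set_entry t r j a) /\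
  cols_weakly_increasing_from (set_entry t r j a) j.+1.
Proof.
move=> hjr hrows hcols; split=> [i i' hii'|k i hk hk'].
  by rewrite !size_set_entry //; apply: hrows.
rewrite !nth_set_entry // (_ : k == j = false) ?andbF; last by apply/negbTE; lia.
by apply: hcols; [lia | rewrite -(size_set_entry a _ hjr)].
Qed.

Lemma append_first_row t z j : size (row t 0) = j ->
  let U := set_row t 0 (rcons (row t 0) z) in
  [/\ size (row U 0) = j.+1, nth dflt (row U 0) j = z,
      (forall k, k < j -> nth dflt (row U 0) k = nth dflt (row t 0) k) &
      (forall i, 0 < i -> row U i = row t i)].
Proof.
move=> hsz U; have hU0 : row U 0 = rcons (row t 0) z by rewrite row_set_row.
rewrite hU0 size_rcons hsz nth_rcons hsz ltnn eqxx; split=> //.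
  by move=> k hk; rewrite nth_rcons hsz hk.
by case=> // i _; rewrite row_set_row.
Qed.

(* Besides bookkeeping on
   the untouched part, every B_0 entry of the first row from column j on
   lets a slide exit the first row, and the entry at column j is either z
   itself or also lets a slide exit. *)
Lemma col_insert_first_row f t z j U c :
  rows_nonincreasing t -> cols_weakly_increasing_from t j -> isB1 z ->
  j <= size (row t 0) ->
  run f t (ColIns z j) = Some (U, NewBox 0 c) ->
  [/\ j <= c /\ size (row U 0) = c.+1,
      (forall c0, j <= c0 <= c -> isB0 (nth dflt (row U 0) c0) -> slide_exits U c0),
      nth dflt (row U 0) j = z \/ slide_exits U j,
      (forall i k, k < j -> nth dflt (row U i) k = nth dflt (row t i) k) &
      (forall i, 0 < i -> size (row U i) = size (row t i))].
Proof.
elim: f t z j => [|f IH] t z j hrows hcols hz hj //=.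
rewrite /step -/(col_rows t j) -/(col_entries t j).
case E: [seq a <- col_entries t j | ltL z a] => [|b s].
- (* no entry of column j exceeds z: z is appended to the first row *)
  rewrite run_fin => -[<- e0 <-]; rewrite e0.
  have hsz : size (row t 0) = j.
    by apply/eqP; rewrite eqn_leq hj col_rows_nil //; apply/nilP/eqP.
  have [hsU hUj hU0 hUi] := append_first_row z hsz.
  rewrite hsU hsz; split=> //.
  + move=> c0 hc0; have -> : c0 = j by lia.
    by rewrite hUj (negbTE hz).
  + by left.
  + by move=> [|i] k hk; rewrite ?hU0 ?hUi.
  + by move=> i /hUi ->.
rewrite /=; change (foldl minL b s) with (least (b :: s)); set w := least (b :: s).
have [hzw hwe] := least_filter E.
have hw1 := ltL_B1 hz hzw.
have [hjr hbelow] := col_row_of_spec hrows hcols hwe.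
rewrite (negbTE hw1) -/(col_row_of t j w); set r := col_row_of t j w in hjr hbelow *.
have [hrows' hcols'] := set_entry_invariants z hjr hrows hcols.
have hj' : j.+1 <= size (row (set_entry t r j z) 0).
  by rewrite size_set_entry //; apply: leq_trans hjr (hrows _ _ _).
move/(IH _ _ _ hrows' hcols' hw1 hj') => [[hjc hsU] hexit hhead hleft hsizes].
have hU i k : k <= j -> nth dflt (row U i) k =
    if (i == r) && (k == j) then z else nth dflt (row t i) k.
  by move=> hk; rewrite hleft // nth_set_entry.
have hsizesU i : 0 < i -> size (row U i) = size (row t i).
  by move=> hi; rewrite hsizes // size_set_entry.
have hexit_j : 0 < r -> slide_exits U j.
  move=> r1; case: hhead => [hw|[jj [h1 h2 h3 h4]]]; last by exists jj; split=> //; lia.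
  exists j; split=> //; first lia.
    by rewrite hsizesU //; apply: leq_trans hjr (hrows _ _ _).
  rewrite hw hU // eqxx andbT; case: ifP => [//|r1n].
  by apply: hbelow; lia.
split=> //; first lia.
- move=> c0 /andP[hjc0 hc0c]; case: (ltngtP j c0) hjc0 => [hlt _|//|<- _].
    by apply: hexit; rewrite hlt.
  by rewrite hU // eqxx andbT; case: (posnP r) => [->|/hexit_j //]; rewrite (negbTE hz).
- rewrite hU // eqxx andbT; case: (posnP r) => [->|/hexit_j]; by [left | right].
- by move=> i k hk; rewrite hU 1?ltnW // (_ : k == j = false) ?andbF //; apply/negbTE; lia.
Qed.

Lemma row_insert_cancel_first_row f U x V :
  (forall c0, c0 < size (row U 0) -> isB0 (nth dflt (row U 0) c0) -> slide_exits U c0) ->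
  run f U (RowIns x 0) = Some (V, Cancelled) -> size (row V 0) = size (row U 0).
Proof.
case: f => [|f] //= hexit.
case E: [seq a <- row U 0 | ltL x a] => [|b s] /=; first by case: (f).
change (foldl minL b s) with (least (b :: s)); set w := least (b :: s).
have [_ hwU] := least_filter E.
have hc0 : index w (row U 0) < size (row U 0) by rewrite index_mem.
have hwc0 : nth dflt (row U 0) (index w (row U 0)) = w by rewrite nth_index.
case: ifP => [/andP[_ /eqP hwbar]|_].
  (* cancellation of the entry w = \bar 1: its box is slid out *)
  by apply: slide_first_row; apply: hexit; rewrite // hwc0 hwbar.
(* w is replaced by x: the first row keeps its length for good *)
case: ifP => hw0 H.
  rewrite (first_row_fixed _ _ H) ?size_set_entry //; lia.
by case: (col_no_cancel _ H); rewrite /isB1 hw0.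
Qed.

Lemma spo_rows_nonincreasing m n t : is_spo m n t -> rows_nonincreasing t.
Proof.
move=> [_ [hsorted _]] i i' hii'.
case: (ltnP i' (size t)) => hi'; last by rewrite /row nth_default.
have geq_trans : transitive geq by move=> y x z /= h1 h2; lia.
have := sorted_leq_nth geq_trans (fun x => leqnn x) 0 hsorted.
move=> /(_ i i'); rewrite !inE !size_map => /(_ (leq_ltn_trans hii' hi') hi' hii').
by rewrite !(nth_map [::]) //; apply: leq_ltn_trans hii' hi'.
Qed.

(* The columns of an spo-tableau weakly increase: B_0 entries strictly,
   B_1 entries weakly, and a B_1 entry never lies above a B_0 entry. *)
Lemma spo_cols_weakly_increasing m n t : is_spo m n t -> cols_weakly_increasing_from t 0.
Proof.
move=> hspo; have hrows := spo_rows_nonincreasing hspo.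
move: hspo => [_ [_ [_ [_ [hyoung [_ [hcol0 [_ [_ hcol1]]]]]]]]] k i _ hk.
have hk0 : k < size (row t i) by apply: leq_trans hk (hrows _ _ _).
have e1 : entry t i.+1 k = Some (nth dflt (row t i.+1) k) by rewrite /entry (nth_map dflt).
have e0 : entry t i k = Some (nth dflt (row t i) k) by rewrite /entry (nth_map dflt).
move: (hyoung i k) (hcol0 i k _ _ e0 e1) (hcol1 i k _ _ e0 e1); rewrite e0 e1 /=.
rewrite /isB1 /leL.
case: (nth dflt (row t i) k) => [[ia ba]|ia]; case: (nth dflt (row t i.+1) k) => [[ib bb]|ib] //=.
- by move=> _ /(_ isT isT) ->; rewrite orbT.
- by move=> /(_ isT).
- by move=> _ _ ->.
Qed.

Unset Implicit Arguments.

Theorem mainTheorem5 (m n : nat) (T U V : tableau) (x1 x2 : letter) (c : nat) :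
  0 < m -> 0 < n ->
  is_spo m n T ->
  inB1 n x1 ->
  insert_col x1 T = Some (U, NewBox 0 c) ->
  inB0 m x2 ->
  insert_row U x2 = Some (V, Cancelled) ->
  size (row V 0) = size (row U 0).
Proof.
move=> _ _ hT hx1 hU _ hV.
have hx1B1 : isB1 x1 by case: (x1) hx1 => [[]|].
have [[_ hsU] hexit _ _ _] := col_insert_first_row (spo_rows_nonincreasing hT)
  (spo_cols_weakly_increasing hT) hx1B1 (leq0n _) hU.
apply: row_insert_cancel_first_row hV => c0 hc0.
by apply: hexit; lia.
Qed.
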